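(* Let $L$ be a sublattice of $A_n$ of rank $n$ and $D\in\mathbb Z^{n+1}$. (i) $r(D)=-1$ if and only if $-D\in\Sigma(L)$. (ii) $r(D)=\min\{\|p+D\|_{\ell_1}: p\in\Sigma(L)\}-1$, where $\|x\|_{\ell_1}=\sum_i|x_i|$.
   Context: Let $n\ge 1$, $H_0=\{x\in\mathbb R^{n+1}:\sum_i x_i=0\}$ and $A_n=H_0\cap\mathbb Z^{n+1}$. For $x\in\mathbb R^{n+1}$, $\deg(x)=\sum_i x_i$. Write $x\le y$ iff $x_i\le y_i$ for all $i$. For a sublattice $L\subseteq A_n$ of rank $n$ and $D\in\mathbb Z^{n+1}$: $|D|=\{E\in\mathbb Z^{n+1}:E\ge 0,\ D-E\in L\}$; $r(D)=-1$ if $|D|=\emptyset$, and otherwise $r(D)=\min\{\deg(E):E\in\mathbb Z^{n+1},E\ge0,|D-E|=\emptyset\}-1$. The Sigma-Region is $\Sigma(L)=\{D\in\mathbb Z^{n+1}: D\not\le p \text{ for all } p\in L\}$. *)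

From HB Require Import structures.
From mathcomp Require Import all_boot all_order all_algebra.
From Stdlib Require Import ClassicalEpsilon.
Set Implicit Arguments. Unset Strict Implicit. Unset Printing Implicit Defensive.
Import Order.TTheory GRing.Theory Num.Theory.
Local Open Scope ring_scope.

Section Defs.
Variable n : nat.
Local Notation vec := 'rV[int]_(n.+1).

Definition deg (x : vec) : int := \sum_(i < n.+1) x ord0 i.

Definition vle (x y : vec) : Prop := forall i : 'I_n.+1, x ord0 i <= y ord0 i.

Definition l1norm (x : vec) : int := \sum_(i < n.+1) `|x ord0 i|.

(* L is a sublattice of A_n = H_0 ∩ Z^{n+1} of rank n:
   a subgroup of Z^{n+1} contained in H_0, containing n vectors that are
   linearly independent (over Q). *)
Definition An_sublattice_rank_n (L : vec -> Prop) : Prop :=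
  [/\ L 0,
      (forall x y, L x -> L y -> L (x - y)),
      (forall x, L x -> deg x = 0) &
      exists M : 'M[int]_(n, n.+1),
        (forall i, L (row i M)) /\
        \rank (map_mx (fun z : int => z%:~R : rat) M) = n].

Definition linsys (L : vec -> Prop) (D : vec) (E : vec) : Prop :=
  vle 0 E /\ L (D - E).

Definition linsys_empty (L : vec -> Prop) (D : vec) : Prop :=
  forall E, ~ linsys L D E.

(* the minimum of a set of integers (classical choice; meaningful when the
   minimum exists) *)
Definition intmin (P : int -> Prop) : int :=
  epsilon (inhabits 0) (fun m => P m /\ forall k, P k -> m <= k).

Definition rankD (L : vec -> Prop) (D : vec) : int :=
  if excluded_middle_informative (linsys_empty L D) then -1
  else intmin (fun k => exists E : vec,
                  [/\ vle 0 E, linsys_empty L (D - E) & deg E = k]) - 1.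

Definition inSigma (L : vec -> Prop) (D : vec) : Prop :=
  forall p, L p -> ~ vle D p.

End Defs.

(** The rank is governed by the set of effective "obstructions": [r(D) + 1] is
    the least degree of an [E >= 0] with [|D - E|] empty, and [|D - E|] is
    empty exactly when [E - D] lies in [Sigma(L)] (an element of [|D - E|] is
    an [F >= 0] with [E + F - D] in [L], i.e. [E - D <= p] for some [p] in
    [L]).  So every such [E] yields [p = E - D] in [Sigma(L)] with
    [||p + D||_1 = deg E]; conversely, [Sigma(L)] is upward closed, so for
    [p] in [Sigma(L)] the positive part [E] of [p + D] is again an obstruction,
    of degree at most [||p + D||_1].  Both minima therefore agree, and the
    minimum is [0] exactly when [E = 0] is an obstruction, i.e. [|D|] is
    empty.  Obstructions always exist: since [L] lies in [H_0], any [E >= 0]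
    with [deg E > deg D] is one. *)

From HB Require Import structures.
From mathcomp Require Import all_boot all_order all_algebra.
From Stdlib Require Import Classical ClassicalEpsilon Wf_nat.
Set Implicit Arguments. Unset Strict Implicit. Unset Printing Implicit Defensive.
Import Order.TTheory GRing.Theory Num.Theory.
Local Open Scope ring_scope.

Section IntMin.

Variable P : int -> Prop.
Hypothesis P_ge0 : forall k, P k -> 0 <= k.

Lemma intmin_spec : (exists k, P k) ->
  P (intmin P) /\ forall k, P k -> intmin P <= k.
Proof.
move=> [k Pk].
have [m [[Pm m_min] _]] : has_unique_least_element le (fun m : nat => P m%:Z).
  apply: dec_inh_nat_subset_has_unique_least_element => [m|]; first exact: classic.
  by move: (P_ge0 Pk); case: k Pk => // m Pm _; exists m.
apply: (epsilon_spec (inhabits 0) (fun m => P m /\ forall k, P k -> m <= k)).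
exists m%:Z; split=> // j Pj.
move: (P_ge0 Pj); case: j Pj => // j Pj _.
by rewrite lez_nat; apply/ssrnat.leP; apply: m_min.
Qed.

Lemma intmin_eq m : P m -> (forall k, P k -> m <= k) -> intmin P = m.
Proof.
move=> Pm m_min; have [Pmin min_le] := intmin_spec (ex_intro _ m Pm).
by apply/le_anti; rewrite min_le // m_min.
Qed.

End IntMin.

Lemma intmin_cofinal (P Q : int -> Prop) :
  (forall k, P k -> 0 <= k) -> (forall k, Q k -> 0 <= k) ->
  (exists k, P k) -> (forall k, P k -> Q k) ->
  (forall k, Q k -> exists2 j, P j & j <= k) -> intmin P = intmin Q.
Proof.
move=> P_ge0 Q_ge0 P_ex PQ QP; have [Pmin Pmin_le] := intmin_spec P_ge0 P_ex.
apply/esym/(intmin_eq Q_ge0) => [|j /QP[i Pi le_ij]]; first exact: PQ.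
exact: le_trans (Pmin_le _ Pi) le_ij.
Qed.

Section Vectors.

Variable n : nat.
Local Notation vec := 'rV[int]_(n.+1).

Lemma degD (x y : vec) : deg (x + y) = deg x + deg y.
Proof. by rewrite /deg -big_split; apply: eq_bigr => i _; rewrite mxE. Qed.

Lemma degN (x : vec) : deg (- x) = - deg x.
Proof. by rewrite /deg -sumrN; apply: eq_bigr => i _; rewrite mxE. Qed.

Lemma degB (x y : vec) : deg (x - y) = deg x - deg y.
Proof. by rewrite degD degN. Qed.

Lemma deg_const (c : int) : deg (const_mx c : vec) = c *+ n.+1.
Proof.
by rewrite /deg (eq_bigr (fun=> c)) ?sumr_const ?card_ord // => i _; rewrite mxE.
Qed.

Lemma vle_trans (x y z : vec) : vle x y -> vle y z -> vle x z.
Proof. by move=> xy yz i; apply: le_trans (xy i) (yz i). Qed.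

Lemma vle0_ge0 (x : vec) i : vle 0 x -> 0 <= x ord0 i.
Proof. by move=> /(_ i); rewrite mxE. Qed.

Lemma deg_ge0 (x : vec) : vle 0 x -> 0 <= deg x.
Proof. by move=> x_ge0; apply: sumr_ge0 => i _; apply: vle0_ge0. Qed.

Lemma deg_eq0 (x : vec) : vle 0 x -> deg x = 0 -> x = 0.
Proof.
move=> x_ge0 deg0; apply/matrixP => i j; rewrite ord1 mxE.
by apply: (psumr_eq0P (P := xpredT) (F := fun j => x ord0 j)) => // k _; apply: vle0_ge0.
Qed.

Lemma l1norm_ge0 (x : vec) : 0 <= l1norm x.
Proof. by apply: sumr_ge0 => i _; apply: normr_ge0. Qed.

Lemma l1norm_deg (x : vec) : vle 0 x -> l1norm x = deg x.
Proof. by move=> x_ge0; apply: eq_bigr => i _; apply/ger0_norm/vle0_ge0. Qed.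

Definition pos_part (x : vec) : vec := \row_i Num.max (x ord0 i) 0.

Lemma pos_part_ge0 x : vle 0 (pos_part x).
Proof. by move=> i; rewrite !mxE le_max lexx orbT. Qed.

Lemma pos_part_ge x : vle x (pos_part x).
Proof. by move=> i; rewrite mxE le_max lexx. Qed.

Lemma deg_pos_part x : deg (pos_part x) <= l1norm x.
Proof. by apply: ler_sum => i _; rewrite mxE ge_max ler_norm normr_ge0. Qed.

End Vectors.

Section Lattice.

Variable n : nat.
Local Notation vec := 'rV[int]_(n.+1).

Variable L : vec -> Prop.
Hypothesis L0 : L 0.
Hypothesis L_sub : forall x y, L x -> L y -> L (x - y).
Hypothesis L_deg0 : forall x, L x -> deg x = 0.

Lemma L_opp x : L x -> L (- x).
Proof. by move=> Lx; have := L_sub L0 Lx; rewrite sub0r. Qed.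

Lemma inSigma_le p q : inSigma L p -> vle p q -> inSigma L q.
Proof. by move=> Sp pq l Ll ql; apply: (Sp l Ll); apply: vle_trans pq ql. Qed.

Lemma linsys_empty_inSigma D : linsys_empty L D <-> inSigma L (- D).
Proof.
split=> [D0 p Lp Dp | SD E [E_ge0 LDE]].
- apply: (D0 (D + p)); split; last by rewrite opprD addrA subrr add0r; apply: L_opp.
  by move=> i; move: (Dp i); rewrite !mxE -subr_ge0 opprK addrC.
- apply: (SD _ (L_opp LDE)) => i; move: (E_ge0 i).
  by rewrite !mxE opprB lerDr.
Qed.

Lemma linsys_empty_deg D : deg D < 0 -> linsys_empty L D.
Proof.
move=> D_lt0 E [E_ge0 /L_deg0]; rewrite degB => /eqP; rewrite subr_eq0 => /eqP DE.
by move: (deg_ge0 E_ge0); rewrite -DE leNgt D_lt0.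
Qed.

Definition obstruction_deg D (k : int) :=
  exists E : vec, [/\ vle 0 E, linsys_empty L (D - E) & deg E = k].

Lemma obstruction_deg_ge0 D k : obstruction_deg D k -> 0 <= k.
Proof. by move=> [E [E_ge0 _ <-]]; apply: deg_ge0. Qed.

Lemma obstruction_deg_exists D : exists k, obstruction_deg D k.
Proof.
pose c : int := `|deg D| + 1.
exists (deg (const_mx c : vec)), (const_mx c); split=> //.
  by move=> i; rewrite !mxE addr_ge0.
apply: linsys_empty_deg; rewrite degB subr_lt0 deg_const mulrSr.
apply: (lt_le_trans (y := c)); first by rewrite ltr_pwDr // ler_norm.
by rewrite lerDr mulrn_wge0 // addr_ge0.
Qed.

Lemma obstruction_deg0 D : linsys_empty L D -> obstruction_deg D 0.
Proof.
exists 0; split; [by move=> i | by rewrite subr0 |].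
by rewrite /deg big1 // => i _; rewrite mxE.
Qed.

Lemma rankD_intmin D : rankD L D = intmin (obstruction_deg D) - 1.
Proof.
rewrite /rankD; case: excluded_middle_informative => [D0|//].
suff -> : intmin (obstruction_deg D) = 0 by rewrite sub0r.
apply: (intmin_eq (@obstruction_deg_ge0 D)) => [|k]; last exact: obstruction_deg_ge0.
exact: obstruction_deg0.
Qed.

Lemma rankD_eqN1 D : rankD L D = -1 <-> linsys_empty L D.
Proof.
split=> [|D0]; last by rewrite /rankD; case: excluded_middle_informative.
rewrite rankD_intmin => /eqP; rewrite subr_eq addNr => /eqP min0.
have [[E [E_ge0 DE0 degE]] _] :=
  intmin_spec (@obstruction_deg_ge0 D) (obstruction_deg_exists D).
by move: DE0; rewrite (deg_eq0 E_ge0) ?subr0 // degE min0.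
Qed.

Lemma intmin_obstruction_l1norm D : intmin (obstruction_deg D) =
  intmin (fun k => exists p, inSigma L p /\ l1norm (p + D) = k).
Proof.
apply: intmin_cofinal => [|||k [E [E_ge0 DE0 <-]]|k [p [Sp <-]]].
- exact: obstruction_deg_ge0.
- by move=> k [p [_ <-]]; apply: l1norm_ge0.
- exact: obstruction_deg_exists.
- exists (E - D); split; last by rewrite subrK l1norm_deg.
  by rewrite -opprB -linsys_empty_inSigma.
- exists (deg (pos_part (p + D))); last exact: deg_pos_part.
  exists (pos_part (p + D)); split=> //; first exact: pos_part_ge0.
  rewrite linsys_empty_inSigma opprB; apply: inSigma_le Sp _ => i.
  by move: (pos_part_ge (p + D) i); rewrite !mxE lerBrDr.
Qed.

End Lattice.

Theorem lemma2p1 (n : nat) (L : 'rV[int]_(n.+1) -> Prop) (D : 'rV[int]_(n.+1)) :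
  (0 < n)%N -> An_sublattice_rank_n L ->
  (rankD L D = -1 <-> inSigma L (- D)) /\
  rankD L D = intmin (fun k => exists p, inSigma L p /\ l1norm (p + D) = k) - 1.
Proof.
(* Only [L] being a subgroup of [H_0] matters; [0 < n] and the rank are unused. *)
move=> _ [L0 L_sub L_deg0 _]; split.
  exact: iff_trans (rankD_eqN1 L_deg0 D) (linsys_empty_inSigma L0 L_sub D).
by rewrite rankD_intmin (intmin_obstruction_l1norm L0 L_sub L_deg0).
Qed.
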